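(* For every integer $k\geqslant 1$, there exists a finite word $W$ over a $4$-letter alphabet with exactly $k$ distinct reducts, i.e., $r(W)=k$.
   Context: A square is a finite non-empty word of the form $XX$; a word is square-free if it has no square factor. A square reduction replaces a word $UXXV$ (with $X$ non-empty) by $UXV$. A reduct of $W$ is any square-free word obtainable from $W$ by a finite sequence of square reductions, and $r(W)$ is the number of distinct reducts of $W$. *)

From mathcomp Require Import all_boot.
From Stdlib Require Import Relations.

Set Implicit Arguments.
Unset Strict Implicit.
Unset Printing Implicit Defensive.

Definition has_square (T : Type) (w : seq T) : Prop :=
  exists u x v : seq T, x <> [::] /\ w = u ++ x ++ x ++ v.

Definition square_free (T : Type) (w : seq T) : Prop := ~ has_square w.

Definition square_step (T : Type) (w w' : seq T) : Prop :=
  exists u x v : seq T, x <> [::] /\ w = u ++ x ++ x ++ v /\ w' = u ++ x ++ v.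

Definition reduces (T : Type) : relation (seq T) :=
  clos_refl_trans (seq T) (@square_step T).

Definition reduct (T : Type) (w y : seq T) : Prop :=
  reduces w y /\ square_free y.

Definition num_reducts_eq (T : eqType) (w : seq T) (k : nat) : Prop :=
  exists s : seq (seq T), uniq s /\ size s = k /\
    (forall y : seq T, y \in s <-> reduct w y).

(* A word XX over {0, 1, 2} whose only square factor is XX itself comes from the
   Thue-Morse morphism: mu^n(0110110) has overlaps only of period 3 * 2^n, starting
   before 2^n, so the first-difference coding of its prefix of length 6 * 2^n + 1 is
   such a square. With the fourth letter d as a separator, let
   W = P_0 d P_1 d ... d P_(k-1) d XX, where P_t is the prefix of XX of length
   |X| + k - t. The blocks are distinct and d-free, and all but XX are square-free,
   so a square in a word of this shape either is XX, which reduces to X, or straddles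
   one separator and deletes a block that is a prefix of its right neighbour; as
   consecutive P_t end with different letters, this only removes the last P_t before
   XX. Hence the reducts of W are the k words P_0 d ... d P_j d X with j < k. *)

From mathcomp Require Import all_boot zify.
From Stdlib Require Import Relations.

Set Implicit Arguments.
Unset Strict Implicit.
Unset Printing Implicit Defensive.

Lemma cat_eq_cat (T : Type) (a b c e : seq T) : a ++ b = c ++ e ->
  (exists w, c = a ++ w /\ b = w ++ e) \/ (exists x w, a = c ++ x :: w /\ e = x :: w ++ b).
Proof.
elim: a c => [|x a IH] [|y c] /=.
- by move=> ->; left; exists [::].
- by move=> ->; left; exists (y :: c).
- by move=> <-; right; exists x, a.
- case=> <- /IH [[w [-> ->]]|[z [w [-> ->]]]]; [left; exists w | right; exists z, w]; by [].
Qed.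

Lemma nth_cat_size (T : Type) (x0 : T) u s k : nth x0 (u ++ s) (size u + k) = nth x0 s k.
Proof. by rewrite nth_cat ltnNge leq_addr addKn. Qed.

Lemma nth_square (T : Type) (x0 : T) u x v k : size u <= k < size u + size x ->
  nth x0 (u ++ x ++ x ++ v) k = nth x0 (u ++ x ++ x ++ v) (k + size x).
Proof.
case/andP => le_uk lt_k; rewrite -(subnKC le_uk) -addnA !nth_cat_size addnC nth_cat_size.
by rewrite !nth_cat (_ : k - size u < size x) //; lia.
Qed.

Lemma periodic_square (T : Type) (x0 : T) m s : size s = m.*2 ->
  (forall k, k < m -> nth x0 s (k + m) = nth x0 s k) -> s = take m s ++ take m s.
Proof.
move=> size_s per; have size_m : size (take m s) = m by rewrite size_takel // size_s; lia.
apply: (@eq_from_nth _ x0); first by rewrite size_cat size_m size_s; lia.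
move=> k; rewrite size_s => lt_k; rewrite nth_cat size_m.
case: ifP => [lt_km | /negbT]; first by rewrite nth_take.
rewrite -leqNgt => le_mk; rewrite nth_take; last by lia.
by rewrite -(per (k - m)) ?subnK //; lia.
Qed.

Definition sole_square (T : eqType) (w : seq T) : Prop :=
  forall u x v, x != [::] -> w = u ++ x ++ x ++ v -> u = [::] /\ v = [::].

Lemma sole_square_prefix (T : eqType) (w b a x c : seq T) : sole_square w -> prefix b w ->
  x != [::] -> b = a ++ x ++ x ++ c -> [/\ b = w, a = [::] & c = [::]].
Proof.
move=> sole /prefixP [w' Ew] x_nil Eb.
have [-> /nilP] := sole a x (c ++ w') x_nil ltac:(by rewrite Ew Eb -!catA).
by rewrite cat_nilp => /andP [/nilP -> /nilP Ew']; rewrite Ew Eb Ew' !cats0.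
Qed.

Lemma sole_square_adjacent (T : eqType) (x0 : T) w i : sole_square w -> i.+2 < size w ->
  nth x0 w i != nth x0 w i.+1.
Proof.
move=> sole lt_i; apply/eqP => E.
have Ew : w = take i w ++ [:: nth x0 w i] ++ [:: nth x0 w i] ++ drop i.+2 w.
  by rewrite -{1}(cat_take_drop i w) (drop_nth x0) 1?(drop_nth x0) -?E //; lia.
have [_ /eqP] := sole (take i w) [:: nth x0 w i] (drop i.+2 w) isT Ew.
by rewrite -size_eq0 size_drop; lia.
Qed.

Lemma cat_cons_eq_rcons (T : eqType) (s1 s2 s : seq T) x :
  s1 ++ x :: s2 = rcons s x -> x \notin s -> s1 = s /\ s2 = [::].
Proof.
case/lastP: s2 => [|s2 y]; first by rewrite cats1 => /rcons_inj [->].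
by rewrite -rcons_cons -rcons_cat => /rcons_inj [<- _]; rewrite mem_cat mem_head orbT.
Qed.

Lemma square_step_not_square_free (T : Type) (w w' : seq T) :
  square_step w w' -> ~ square_free w.
Proof. by move=> [u [x [v [x_nil [E _]]]]]; apply; exists u, x, v. Qed.

Section Intercalate.
Variables (T : eqType) (d : T).

Definition sep_before (bs : seq (seq T)) : seq T := flatten [seq d :: b | b <- bs].
Definition sep_after (bs : seq (seq T)) : seq T := flatten [seq rcons b d | b <- bs].
Definition intercalate (bs : seq (seq T)) : seq T :=
  if bs is b :: bs' then b ++ sep_before bs' else [::].

Definition dfree (b : seq T) : bool := d \notin b.

Lemma sep_before_cons b bs : sep_before (b :: bs) = d :: b ++ sep_before bs.
Proof. by []. Qed.

Lemma intercalate_cat bs1 b bs2 :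
  intercalate (bs1 ++ b :: bs2) = sep_after bs1 ++ b ++ sep_before bs2.
Proof.
elim: bs1 => [|c bs1 IH] //=.
have -> : sep_before (bs1 ++ b :: bs2) = d :: intercalate (bs1 ++ b :: bs2) by case: bs1 {IH}.
by rewrite IH -cat_rcons catA.
Qed.

Lemma intercalate_rcons bs b : intercalate (rcons bs b) = sep_after bs ++ b.
Proof. by rewrite -cats1 intercalate_cat cats0. Qed.

Lemma intercalate_split bs A B : bs != [::] -> intercalate bs = A ++ B ->
  exists bs1 b bs2 a c, [/\ bs = bs1 ++ b :: bs2, b = a ++ c,
    A = sep_after bs1 ++ a & B = c ++ sep_before bs2].
Proof.
elim: bs A => [|b bs IH] // A _ /esym /cat_eq_cat [[c [-> ->]]|[x [w [-> E]]]].
  by exists [::], (A ++ c), bs, A, c.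
case: bs IH E => [|b' bs] IH // [<- E].
have [bs1 [b1 [bs2 [a [c [-> -> -> ->]]]]]] := IH w isT E.
exists (b :: bs1), (a ++ c), bs2, a, c; split => //=.
by rewrite /sep_after /= -catA cat_rcons.
Qed.

Lemma dfree_cat_sep_before b bs Q B : dfree b -> dfree Q ->
  b ++ sep_before bs = Q ++ d :: B -> b = Q /\ bs != [::] /\ B = intercalate bs.
Proof.
move=> db dQ /cat_eq_cat [[w [EQ E]]|[x [w [Eb E]]]]; last first.
  by case: bs E => [|b' bs] // [Ex _]; move: db; rewrite /dfree Eb Ex mem_cat inE eqxx orbT.
case: w EQ E => [|x w] EQ; first by rewrite EQ cats0; case: bs => [|b' bs] // [<-].
by case: bs => [|b' bs] // [Ex _]; move: dQ; rewrite /dfree EQ Ex mem_cat inE eqxx orbT.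
Qed.

Lemma intercalate_cut bs A B : all dfree bs -> intercalate bs = A ++ d :: B ->
  exists bs1 bs2, [/\ bs = bs1 ++ bs2, bs1 != [::], bs2 != [::],
    A = intercalate bs1 & B = intercalate bs2].
Proof.
move=> dbs E; have bs_nil : bs != [::] by apply: contra_eqN E => /eqP ->; case: A.
have [bs1 [b [bs2 [a [c [Ebs Eb EA EB]]]]]] := intercalate_split bs_nil E.
have db : dfree c.
  by move: dbs; rewrite Ebs Eb all_cat /= /dfree mem_cat negb_or => /and3P [_ /andP[_ ->]].
have [Ec [bs2_nil EB']] := dfree_cat_sep_before (Q := [::]) db isT (esym EB).
exists (rcons bs1 b), bs2; split => //; first by rewrite Ebs cat_rcons.
- by case: (bs1).
- by rewrite intercalate_rcons EA Eb Ec cats0.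
Qed.

Lemma intercalate_block bs A Q B : all dfree bs -> dfree Q ->
  intercalate bs = A ++ d :: Q ++ d :: B ->
  exists bs1 bs2, [/\ bs = bs1 ++ Q :: bs2, bs1 != [::], bs2 != [::],
    A = intercalate bs1 & B = intercalate bs2].
Proof.
move=> dbs dQ /(intercalate_cut dbs) [bs1 [[|b bs2] [Ebs bs1_nil //= _ EA EQB]]].
have db : dfree b by move: dbs; rewrite Ebs all_cat => /andP [_ /andP []].
have [Eb [bs2_nil EB]] := dfree_cat_sep_before db dQ (esym EQB).
by exists bs1, bs2; rewrite Ebs Eb.
Qed.

Lemma intercalate_factor bs A C B : all dfree bs -> bs != [::] -> dfree C ->
  intercalate bs = A ++ C ++ B ->
  exists bs1 b bs2 a c, [/\ bs = bs1 ++ b :: bs2, b = a ++ C ++ c,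
    A = sep_after bs1 ++ a & B = c ++ sep_before bs2].
Proof.
move=> dbs bs_nil dC /(intercalate_split bs_nil) [bs1 [b [bs2 [a [c0 [Ebs Eb EA ECB]]]]]].
case: (cat_eq_cat ECB) => [[c [Ec0 EB]]|[x [w [EC Esep]]]].
  by exists bs1, b, bs2, a, c; split => //; rewrite Eb Ec0.
case: bs2 Esep {Ebs ECB} => [|b' bs2] // [Ex _].
by move: dC; rewrite /dfree EC -Ex mem_cat inE eqxx orbT.
Qed.

(* For such p and s, [l d mid d r] contains the square [(s d p) (s d p)];
   reducing it deletes [mid d]. *)
Definition deletable (l mid r : seq T) : Prop :=
  exists p s, [/\ mid = p ++ s, suffix s l & prefix p r].

Lemma deletable_prefix (x0 : T) (l mid r : seq T) :
  deletable l mid r -> last x0 l != last x0 mid -> prefix mid r.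
Proof.
move=> [p [[|y s] [-> /suffixP [l' ->] pr]]]; first by rewrite !cats0.
by rewrite !last_cat eqxx.
Qed.

Lemma square_step_delete bs1 l mid r bs2 : deletable l mid r ->
  square_step (intercalate (bs1 ++ [:: l, mid, r & bs2]))
              (intercalate (bs1 ++ [:: l, r & bs2])).
Proof.
move=> [p [s [-> /suffixP [l' ->] /prefixP [r' ->]]]].
exists (sep_after bs1 ++ l'), (s ++ d :: p), (r' ++ sep_before bs2).
split; first by move=> /eqP; rewrite -size_eq0 size_cat addnS.
by split; rewrite !intercalate_cat !sep_before_cons -!catA.
Qed.

Lemma square_step_in_block bs1 a x c bs2 : x != [::] ->
  square_step (intercalate (bs1 ++ (a ++ x ++ x ++ c) :: bs2))
              (intercalate (bs1 ++ (a ++ x ++ c) :: bs2)).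
Proof.
move=> /eqP x_nil; exists (sep_after bs1 ++ a), x, (c ++ sep_before bs2).
by split => //; split; rewrite !intercalate_cat -!catA.
Qed.

Lemma split_at_first_sep x : d \in x -> exists s p, x = s ++ d :: p /\ dfree s.
Proof.
move=> dx; exists (take (index d x) x), (drop (index d x).+1 x).
by rewrite -drop_index // cat_take_drop /dfree in_take // ltnn.
Qed.

Lemma cat_sep_before_nil c bs : c ++ sep_before bs = [::] -> c = [::] /\ bs = [::].
Proof. by case: c => //; case: bs. Qed.

Lemma sep_after_cat_nil bs a : sep_after bs ++ a = [::] -> bs = [::] /\ a = [::].
Proof. by case: bs => [|b bs] //=; rewrite /sep_after /=; case: b. Qed.

Lemma intercalate_square_dfree bs U x V : all dfree bs -> bs != [::] -> dfree x ->
  intercalate bs = U ++ x ++ x ++ V ->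
  exists bs1 a c bs2, bs = bs1 ++ (a ++ x ++ x ++ c) :: bs2 /\
    U ++ x ++ V = intercalate (bs1 ++ (a ++ x ++ c) :: bs2).
Proof.
move=> dbs bs_nil dx E; have dxx : dfree (x ++ x) by rewrite /dfree mem_cat orbb.
rewrite (catA x x V) in E.
have [bs1 [b [bs2 [a [c [-> -> -> ->]]]]]] := intercalate_factor dbs bs_nil dxx E.
by exists bs1, a, c, bs2; rewrite intercalate_cat -!catA.
Qed.

Lemma intercalate_square_one_sep bs U s p V : all dfree bs -> uniq bs -> dfree s ->
  intercalate bs = U ++ (s ++ d :: p) ++ (s ++ d :: p) ++ V -> dfree p.
Proof.
(* A second separator in the root would make the block following the first one occur twice. *)
move=> dbs ubs ds E; apply/negP => /split_at_first_sep [q [p' [Ep dq]]].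
rewrite Ep -!catA /= -!catA /= catA in E.
have [bs1 [bs2 [Ebs _ _ _ E2]]] := intercalate_block dbs dq E.
have dbs2 : all dfree bs2 by move: dbs; rewrite Ebs all_cat => /and3P [].
rewrite catA in E2.
have [bs3 [bs4 [Ebs2 _ _ _ _]]] := intercalate_block dbs2 dq (esym E2).
by move: ubs; rewrite Ebs Ebs2 cat_uniq /= mem_cat inE eqxx orbT !andbF.
Qed.

Lemma intercalate_square_sep bs U s p V : all dfree bs -> dfree s -> dfree p ->
  intercalate bs = U ++ (s ++ d :: p) ++ (s ++ d :: p) ++ V ->
  exists bs1 l mid r bs2, [/\ bs = bs1 ++ [:: l, mid, r & bs2], deletable l mid r &
    U ++ (s ++ d :: p) ++ V = intercalate (bs1 ++ [:: l, r & bs2])].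
Proof.
move=> dbs ds dp E.
have dps : dfree (p ++ s) by rewrite /dfree mem_cat negb_or; apply/andP.
have E' : intercalate bs = (U ++ s) ++ d :: (p ++ s) ++ d :: (p ++ V) by rewrite E -!catA.
have [bs1 [bs2 [Ebs bs1_nil bs2_nil E1 E2]]] := intercalate_block dbs dps E'.
have [dbs1 dbs2] : all dfree bs1 /\ all dfree bs2.
  by move: dbs; rewrite Ebs all_cat => /and3P [].
rewrite -[U ++ s]cats0 -catA in E1.
have [bs1' [l [bs1'' [a [c [Ebs1 El EU /esym/cat_sep_before_nil [Ec Ebs1'']]]]]]] :=
  intercalate_factor dbs1 bs1_nil ds (esym E1).
have [bs2' [r [bs2'' [a' [c' [Ebs2 Er /esym/sep_after_cat_nil [Ebs2' Ea'] EV]]]]]] :=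
  intercalate_factor (A := [::]) dbs2 bs2_nil dp (esym E2).
exists bs1', l, (p ++ s), r, bs2''; split.
- by rewrite Ebs Ebs1 Ebs2 Ebs1'' Ebs2' -catA.
- by exists p, s; rewrite El Er Ec Ea' cats0; split; rewrite ?suffix_suffix ?prefix_prefix.
- by rewrite intercalate_cat sep_before_cons El Er Ec Ea' EU EV -!catA.
Qed.

Lemma intercalate_square bs U x V : all dfree bs -> uniq bs -> x != [::] ->
  intercalate bs = U ++ x ++ x ++ V ->
  (exists bs1 a c bs2, bs = bs1 ++ (a ++ x ++ x ++ c) :: bs2 /\
     U ++ x ++ V = intercalate (bs1 ++ (a ++ x ++ c) :: bs2))
  \/ (exists bs1 l mid r bs2, [/\ bs = bs1 ++ [:: l, mid, r & bs2], deletable l mid r &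
     U ++ x ++ V = intercalate (bs1 ++ [:: l, r & bs2])]).
Proof.
move=> dbs ubs x_nil E; have [dx | ndx] := boolP (d \in x).
  right; have [s [p [Ex ds]]] := split_at_first_sep dx; subst x.
  exact: intercalate_square_sep dbs ds (intercalate_square_one_sep dbs ubs ds E) E.
left; have bs_nil : bs != [::].
  apply: contraTneq x_nil => bs0; move: E; rewrite bs0 => /(congr1 size).
  by rewrite !size_cat negbK -size_eq0 /=; lia.
exact: intercalate_square_dfree dbs bs_nil ndx E.
Qed.

End Intercalate.

Definition tm_morph (w : seq bool) : seq bool := flatten [seq [:: x; ~~ x] | x <- w].

Lemma size_tm_morph w : size (tm_morph w) = (size w).*2.
Proof. by elim: w => //= x w IH; rewrite IH doubleS. Qed.

Lemma nth_tm_morph w k (b : bool) : k < size w ->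
  nth false (tm_morph w) (k.*2 + b) = nth false w k (+) b.
Proof.
elim: w k => [|x w IH] // [|k] /= lt_k; last exact: IH.
by case: b {IH}; rewrite /= ?addbF ?addbT.
Qed.

Definition overlap_at (w : seq bool) (i p : nat) : Prop :=
  [/\ 0 < p, i + p.*2 < size w &
      forall k, i <= k <= i + p -> nth false w k = nth false w (k + p)].

Lemma overlap_tm_morph w i p : overlap_at w i p -> overlap_at (tm_morph w) i.*2 p.*2.
Proof.
move=> [p_gt0 lt_ip per]; rewrite /overlap_at size_tm_morph; split; [lia | lia |].
move=> k le_k; have -> : k = (k./2).*2 + odd k by lia.
have -> : (k./2).*2 + odd k + p.*2 = (k./2 + p).*2 + odd k by lia.
by rewrite !nth_tm_morph ?(per k./2) //; lia.
Qed.

Lemma tm_morph_pair_neq w k : ~~ odd k -> k.+1 < size (tm_morph w) ->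
  nth false (tm_morph w) k != nth false (tm_morph w) k.+1.
Proof.
rewrite size_tm_morph => ev_k lt_k.
have -> : k = (k./2).*2 + false by lia.
have -> : ((k./2).*2 + false).+1 = (k./2).*2 + true by lia.
by rewrite !nth_tm_morph; [case: nth | lia | lia].
Qed.

Lemma overlap_tm_morph_period_even w i p : overlap_at (tm_morph w) i p -> ~~ odd p.
Proof.
(* An odd period would make the overlap alternate, so that positions i and i + p differ. *)
move=> [p_gt0 lt_ip per]; apply/negP => odd_p.
have alt k : i <= k < i + p -> nth false (tm_morph w) k != nth false (tm_morph w) k.+1.
  move=> le_k; have [ev_k | odd_k] := boolP (~~ odd k).
    by apply: tm_morph_pair_neq; lia.
  rewrite (per k) ?(per k.+1) ?addSn; try lia.
  by apply: tm_morph_pair_neq; lia.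
have chain m : m <= p -> nth false (tm_morph w) (i + m) = nth false (tm_morph w) i (+) odd m.
  elim: m => [|m IH] le_m; first by rewrite addn0 addbF.
  rewrite addnS; have := alt (i + m) ltac:(lia); rewrite IH; last by lia.
  by rewrite /=; case: nth; case: odd; case: nth.
have := per i ltac:(lia); rewrite chain // odd_p addbT.
by case: nth.
Qed.

Lemma overlap_tm_morph_half w i p : overlap_at (tm_morph w) i p -> overlap_at w i./2 p./2.
Proof.
move=> ov; have ev_p := overlap_tm_morph_period_even ov.
case: ov; rewrite size_tm_morph => p_gt0 lt_ip per; split; [lia | lia |] => k le_k.
have := per (k.*2 + odd i) ltac:(lia).
rewrite (_ : k.*2 + odd i + p = (k + p./2).*2 + odd i); last by lia.
by rewrite !nth_tm_morph; [move/addIb | lia | lia].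
Qed.

Definition tm_seed : seq bool := [:: false; true; true; false; true; true; false].

Lemma overlap_tm_seed : overlap_at tm_seed 0 3.
Proof.
split => // k le_k; have : k < 4 by lia.
by case: k {le_k} => [|[|[|[|]]]].
Qed.

Lemma overlap_tm_seed_inv i p : overlap_at tm_seed i p -> i = 0 /\ p = 3.
Proof.
move=> [p_gt0 lt_ip per].
have : all (fun k => nth false tm_seed k == nth false tm_seed (k + p)) (iota i p.+1).
  by apply/allP => k; rewrite mem_iota => le_k; apply/eqP/per; lia.
have [lt_p lt_i] : p < 4 /\ i < 5 by move: lt_ip; rewrite /=; lia.
by case: p p_gt0 lt_p {lt_ip per} => [|[|[|[|p]]]] // _ _; case: i lt_i => [|[|[|[|[|i]]]]].
Qed.

Lemma overlap_iter_tm_morph m : overlap_at (iter m tm_morph tm_seed) 0 (3 * 2 ^ m).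
Proof.
elim: m => [|m IH]; first exact: overlap_tm_seed.
by rewrite iterS expnS mulnCA mul2n; exact: overlap_tm_morph IH.
Qed.

Lemma overlap_iter_tm_morph_inv m i p : overlap_at (iter m tm_morph tm_seed) i p ->
  i < 2 ^ m /\ p = 3 * 2 ^ m.
Proof.
elim: m i p => [|m IH] i p; first by move/overlap_tm_seed_inv => [-> ->].
rewrite iterS => ov; have ev_p := overlap_tm_morph_period_even ov.
have [lt_i Ep] := IH _ _ (overlap_tm_morph_half ov).
rewrite expnS; lia.
Qed.

Lemma overlap_take n w i p : overlap_at (take n w) i p -> overlap_at w i p.
Proof.
rewrite /overlap_at size_take => -[p_gt0 lt_ip per]; split => //.
  by move: lt_ip; case: ifP; lia.
by move=> k le_k; move: (per k le_k); rewrite !nth_take //; move: lt_ip; case: ifP; lia.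
Qed.

Definition code_letter (x y : bool) : 'I_4 := inord (if x == y then 2 else x).

Definition diff_code (b : seq bool) : seq 'I_4 :=
  pairmap code_letter (head false b) (behead b).

Lemma size_diff_code b : size (diff_code b) = (size b).-1.
Proof. by case: b => //= x b; rewrite size_pairmap. Qed.

Lemma nth_diff_code b k : k.+1 < size b ->
  nth ord0 (diff_code b) k = code_letter (nth false b k) (nth false b k.+1).
Proof. by case: b => //= x b lt_k; rewrite (nth_pairmap false). Qed.

Lemma code_letter_eq x y x' y' : code_letter x y = code_letter x' y' ->
  (x == x') = (y == y') /\ (x != y -> x = x').
Proof.
by move/(congr1 val); rewrite /= !inordK; case: x; case: y; case: x'; case: y'.
Qed.

Lemma ord_max_notin_diff_code b : ord_max \notin diff_code b.
Proof.
rewrite /diff_code; elim: (behead b) (head false b) => //= y s IH x.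
rewrite inE negb_or IH andbT; apply/eqP => /(congr1 val).
by rewrite /= inordK; case: x; case: y.
Qed.

Lemma diff_code_period b i q : 0 < q -> i + q.*2 < size b ->
  (forall k, i <= k < i + q -> nth ord0 (diff_code b) k = nth ord0 (diff_code b) (k + q)) ->
  overlap_at b i q.
Proof.
move=> q_gt0 lt_iq per.
have same k : i <= k < i + q -> code_letter (nth false b k) (nth false b k.+1) =
    code_letter (nth false b (k + q)) (nth false b (k + q).+1).
  by move=> le_k; rewrite -!nth_diff_code; [exact: per | lia | lia].
(* [e] is constant along the period; if it failed, b would be constant on [i, i + q]. *)
pose e k := nth false b k == nth false b (k + q).
have e_const m : m <= q -> e (i + m) = e i.
  elim: m => [|m IH] le_m; first by rewrite addn0.
  rewrite -IH; last by lia.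
  have [E _] := code_letter_eq (same (i + m) ltac:(lia)).
  by rewrite /e E addnS addSn.
have e_i : e i.
  apply: contraT => ne_i.
  have const m : m <= q -> nth false b (i + m) = nth false b i.
    elim: m => [|m IH] le_m; first by rewrite addn0.
    rewrite -(IH ltac:(lia)) addnS; apply/esym/eqP; apply: contraT => neq.
    have [_ /(_ neq) E] := code_letter_eq (same (i + m) ltac:(lia)).
    by move: ne_i; rewrite -(e_const m) /e ?E ?eqxx //; lia.
  by move: ne_i; rewrite /e const ?eqxx.
split => // k le_k; apply/eqP.
have := e_const (k - i) ltac:(lia); rewrite subnKC; last by lia.
by rewrite [e k]/e => ->.
Qed.

Lemma diff_code_square b u x v : x != [::] -> diff_code b = u ++ x ++ x ++ v ->
  overlap_at b (size u) (size x).
Proof.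
case: x => [|y x] // _ E; have := congr1 size E; rewrite size_diff_code !size_cat /= => size_b.
apply: diff_code_period => [// | | k le_k]; first by move: size_b; case: (size b) => /=; lia.
by rewrite E; apply: nth_square.
Qed.

Lemma exists_sole_square n :
  exists X : seq 'I_4, [/\ n < size X, ord_max \notin X & sole_square (X ++ X)].
Proof.
pose L := 3 * 2 ^ n; pose B := take L.*2.+1 (iter n tm_morph tm_seed).
have [_ lt_L perB] := overlap_iter_tm_morph n; rewrite add0n -/L in lt_L perB.
have size_B : size B = L.*2.+1 by rewrite size_takel.
have size_code : size (diff_code B) = L.*2 by rewrite size_diff_code size_B.
have n_lt_L : n < L by rewrite /L; have := ltn_expl n (ltnSn 1); lia.
have code_sq : diff_code B = take L (diff_code B) ++ take L (diff_code B).
  apply: (periodic_square (x0 := ord0) size_code) => k lt_k.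
  rewrite !nth_diff_code ?size_B; try lia.
  by rewrite !nth_take; try lia; rewrite -addSn -!perB //; lia.
exists (take L (diff_code B)); split.
- by rewrite size_takel; [lia | rewrite size_code; lia].
- by apply: contra (ord_max_notin_diff_code B); apply: mem_take.
- rewrite -code_sq => u x v x_nil E.
  have /overlap_take /overlap_iter_tm_morph_inv [lt_u Ex] := diff_code_square x_nil E.
  have := congr1 size E; rewrite size_code !size_cat Ex -/L.
  by case: u {E lt_u} => [|? ?]; case: v => [|? ?] //=; lia.
Qed.

Section Reducts.
Variables (T : eqType) (d : T) (X : seq T) (k : nat).
Hypotheses (dNX : d \notin X) (sole_XX : sole_square (X ++ X)) (lt_k : k < size X).

Local Notation XX := (X ++ X).

Definition prefix_block t := take (size X + k - t) XX.
Definition stage_blocks j Z := [seq prefix_block t | t <- iota 0 j.+1] ++ [:: Z].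
Definition stage j Z := intercalate d (stage_blocks j Z).

Lemma size_prefix_block t : size (prefix_block t) = size X + k - t.
Proof. by rewrite size_takel // size_cat; lia. Qed.

Lemma last_prefix_block_neq t : t.+1 < k ->
  last d (prefix_block t) != last d (prefix_block t.+1).
Proof.
move=> lt_t; rewrite -!nth_last !size_prefix_block -!subn1 !nth_take; try lia.
rewrite (_ : size X + k - t - 1 = (size X + k - t.+1 - 1).+1); last by lia.
by rewrite eq_sym sole_square_adjacent // size_cat; lia.
Qed.

Lemma mem_stage_blocks j Z b : b \in stage_blocks j Z ->
  (exists2 t, t <= j & b = prefix_block t) \/ b = Z.
Proof.
rewrite mem_cat mem_seq1 => /orP [/mapP [t] | /eqP]; last by right.
by rewrite mem_iota => lt_t ->; left; exists t => //; lia.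
Qed.

Lemma size_stage_blocks j Z : size (stage_blocks j Z) = j.+2.
Proof. by rewrite size_cat size_map size_iota addn1. Qed.

Lemma nth_stage_blocks j Z t : t <= j.+1 ->
  nth [::] (stage_blocks j Z) t = if t <= j then prefix_block t else Z.
Proof.
move=> le_t; rewrite nth_cat size_map size_iota ltnS.
case: ifP => [le_tj | /negbT]; first by rewrite (nth_map 0) ?size_iota // nth_iota.
by rewrite -ltnNge => lt_jt; rewrite (_ : t - j.+1 = 0) //; lia.
Qed.

Lemma take_stage_blocks j Z t : t <= j.+1 ->
  take t (stage_blocks j Z) = [seq prefix_block u | u <- iota 0 t].
Proof.
move=> le_t; rewrite take_cat size_map size_iota.
case: ltngtP le_t => // [lt_t | ->] _; last by rewrite subnn take0 cats0.
by rewrite -map_take take_iota; congr map; congr iota; lia.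
Qed.

Lemma stage_blocks_prefix j Z : Z = XX \/ Z = X ->
  {in stage_blocks j Z, forall b, prefix b XX}.
Proof.
move=> HZ b /mem_stage_blocks [[t _ ->] | ->]; first exact: prefix_take.
by case: HZ => ->; [exact: prefix_refl | exact: prefix_prefix].
Qed.

Lemma dfree_stage_blocks j Z : Z = XX \/ Z = X -> all (dfree d) (stage_blocks j Z).
Proof.
move=> HZ; apply/allP => b /(stage_blocks_prefix HZ) /prefixP [w EXX].
by apply/negP => db; move: dNX; rewrite -(orbb (d \in X)) -mem_cat EXX mem_cat db.
Qed.

Lemma uniq_stage_blocks j Z : j < k -> Z = XX \/ Z = X -> uniq (stage_blocks j Z).
Proof.
move=> lt_j HZ; apply: (@map_uniq _ _ size).
rewrite map_cat -map_comp (eq_map (g := fun t => size X + k - t)) => [|t]; last first.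
  exact: size_prefix_block.
rewrite cat_uniq; apply/and3P; split => //.
  by rewrite map_inj_in_uniq ?iota_uniq // => t u; rewrite !mem_iota; lia.
have sZ : size Z = size X \/ size Z = size X + size X.
  by case: HZ => ->; rewrite ?size_cat; [right | left].
rewrite has_seq1.
by apply/negP => /mapP [t]; rewrite mem_iota; lia.
Qed.

Lemma stage_delete j Z bs1 l mid r bs2 : j < k -> Z = XX \/ Z = X ->
  stage_blocks j Z = bs1 ++ [:: l, mid, r & bs2] -> deletable l mid r ->
  [/\ Z = XX, 0 < j & bs1 ++ [:: l, r & bs2] = stage_blocks j.-1 XX].
Proof.
move=> lt_j HZ E del; set t := size bs1.
have size_E : t + 3 + size bs2 = j.+2.
  by rewrite -(size_stage_blocks j Z) E size_cat /=; lia.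
have nth_E u : t + u <= j.+1 ->
    nth [::] [:: l, mid, r & bs2] u = if t + u <= j then prefix_block (t + u) else Z.
  by move=> le_u; rewrite -(nth_cat_size [::] bs1) -E nth_stage_blocks.
have El : l = prefix_block t by have := nth_E 0 ltac:(lia); rewrite addn0 ifT //; lia.
have Emid : mid = prefix_block t.+1 by have := nth_E 1 ltac:(lia); rewrite addn1 ifT //; lia.
have pre : prefix mid r.
  by apply: (deletable_prefix (x0 := d)) del _; rewrite El Emid last_prefix_block_neq //; lia.
have /size_prefix := pre; rewrite Emid size_prefix_block => le_mid_r.
have [Er Ebs2] : r = Z /\ bs2 = [::].
  have := nth_E 2 ltac:(lia); rewrite addn2; case: ifP => /= [le_tj Er | /negbT lt_jt ->].
    by move: le_mid_r; rewrite Er size_prefix_block; lia.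
  by split => //; move: size_E; case: (bs2) => //= *; lia.
have EZ : Z = XX by case: HZ => // EZ; move: le_mid_r; rewrite Er EZ; lia.
have Ej : j = t.+1 by move: size_E; rewrite Ebs2 /=; lia.
have Etake : rcons bs1 l = [seq prefix_block u | u <- iota 0 t.+1].
  rewrite -(take_stage_blocks (j := j) Z) ?E -1?cat_rcons ?take_size_cat ?size_rcons //.
  by lia.
by rewrite /stage_blocks Er Ebs2 EZ Ej -cat_rcons Etake.
Qed.

Lemma stage_in_block j Z bs1 a x c bs2 : j < k -> Z = XX \/ Z = X -> x != [::] ->
  stage_blocks j Z = bs1 ++ (a ++ x ++ x ++ c) :: bs2 ->
  Z = XX /\ bs1 ++ (a ++ x ++ c) :: bs2 = stage_blocks j X.
Proof.
move=> lt_j HZ x_nil E.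
have mem_b : a ++ x ++ x ++ c \in stage_blocks j Z by rewrite E mem_cat mem_head orbT.
have [Eb Ea Ec] := sole_square_prefix sole_XX (stage_blocks_prefix HZ mem_b) x_nil erefl.
have Ex : x = X.
  move: Eb; rewrite Ea Ec cats0 /= => Eb.
  have size_x : size x = size X by move/(congr1 size): Eb; rewrite !size_cat; lia.
  by move/eqP: Eb; rewrite eqseq_cat // => /andP [/eqP].
have EZ : Z = XX.
  case/mem_stage_blocks: mem_b => [[t le_tj] | ]; rewrite Eb // => /(congr1 size).
  by rewrite size_prefix_block size_cat; lia.
have := uniq_stage_blocks lt_j HZ; rewrite /stage_blocks cats1 rcons_uniq EZ => /andP [nin _].
move: E; rewrite /stage_blocks cats1 EZ Eb => /esym /cat_cons_eq_rcons /(_ nin) [-> ->].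
by rewrite Ea Ec Ex cats0 cats1.
Qed.

Lemma stage_step j Z y : j < k -> Z = XX \/ Z = X -> square_step (stage j Z) y ->
  Z = XX /\ (y = stage j X \/ 0 < j /\ y = stage j.-1 XX).
Proof.
move=> lt_j HZ [u [x [v [/eqP x_nil [E ->]]]]].
case: (intercalate_square (dfree_stage_blocks j HZ) (uniq_stage_blocks lt_j HZ) x_nil E)
  => [[bs1 [a [c [bs2 [Ebs ->]]]]] | [bs1 [l [mid [r [bs2 [Ebs del ->]]]]]]].
  by have [EZ ->] := stage_in_block lt_j HZ x_nil Ebs; split => //; left.
by have [EZ j_gt0 ->] := stage_delete lt_j HZ Ebs del; split => //; right.
Qed.

Lemma map_prefix_block_iotaS n :
  [seq prefix_block t | t <- iota 0 n.+1] =
  rcons [seq prefix_block t | t <- iota 0 n] (prefix_block n).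
Proof. by rewrite -addn1 iotaD map_cat cats1. Qed.

Lemma stage_step_delete j : square_step (stage j.+1 XX) (stage j XX).
Proof.
rewrite /stage /stage_blocks !map_prefix_block_iotaS -!cats1 -!catA; apply: square_step_delete.
by exists (prefix_block j.+1), [::]; rewrite cats0 suffix0s prefix_take.
Qed.

Lemma stage_step_collapse j : square_step (stage j XX) (stage j X).
Proof.
have X_nil : X != [::] by rewrite -size_eq0; lia.
have := square_step_in_block d [seq prefix_block t | t <- iota 0 j.+1] [::] [::] [::] X_nil.
by rewrite /stage /stage_blocks cats0.
Qed.

Lemma size_stage_lt j Z : size (stage j Z) < size (stage j.+1 Z).
Proof.
rewrite /stage /stage_blocks (map_prefix_block_iotaS j.+1) cat_rcons.
move: [seq prefix_block t | t <- iota 0 j.+1] => M.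
by rewrite !intercalate_cat sep_before_cons -cat1s !size_cat /=; lia.
Qed.

Definition is_stage y := exists2 j, j < k & y = stage j XX \/ y = stage j X.

Lemma reduces_is_stage x y : reduces x y -> is_stage x -> is_stage y.
Proof.
elim=> {x y} [x y st [j lt_j Ex] | // | x y z _ IH1 _ IH2 /IH1 /IH2 //].
have step Z : Z = XX \/ Z = X -> square_step (stage j Z) y -> is_stage y.
  move=> HZ /(stage_step lt_j HZ) [_ [-> | [j_gt0 ->]]]; first by exists j => //; right.
  by exists j.-1; [lia | left].
by case: Ex => Ex; rewrite Ex in st; apply: step st; [left | right].
Qed.

Lemma reduces_stage j j' : j <= j' -> reduces (stage j' XX) (stage j XX).
Proof.
elim: j' => [|j' IH]; first by rewrite leqn0 => /eqP ->; apply: rt_refl.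
rewrite leq_eqVlt => /orP [/eqP -> | lt_j]; first exact: rt_refl.
by apply: rt_trans (IH lt_j); apply: rt_step; apply: stage_step_delete.
Qed.

Lemma square_free_stage j : j < k -> square_free (stage j X).
Proof.
move=> lt_j [u [x [v [x_nil E]]]].
have step : square_step (stage j X) (u ++ x ++ v) by exists u, x, v.
have [/(congr1 size) /eqP] := stage_step lt_j (or_intror erefl) step.
by rewrite size_cat; lia.
Qed.

Lemma num_reducts_stage : 0 < k -> num_reducts_eq (stage k.-1 XX) k.
Proof.
move=> k_gt0; exists [seq stage j X | j <- iota 0 k]; split; last split.
- have size_mono : {homo (fun j => size (stage j X)) : i j / i < j}.
    by apply: homo_ltn => [y x z | j]; [exact: ltn_trans | exact: size_stage_lt].
  have size_inj := incn_inj (leq_mono size_mono).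
  by rewrite map_inj_uniq ?iota_uniq // => i j /(congr1 size) /size_inj.
- by rewrite size_map size_iota.
move=> y; split.
  case/mapP => j; rewrite mem_iota => lt_j ->; split; last by apply: square_free_stage; lia.
  by apply: rt_trans (reduces_stage _) (rt_step _ _ _ _ (stage_step_collapse j)); lia.
move=> [red sqf]; have [|j lt_j [Ey | Ey]] := reduces_is_stage red.
- by exists k.-1; [lia | left].
- by rewrite Ey in sqf; case: (square_step_not_square_free (stage_step_collapse j)).
- by apply/mapP; exists j; rewrite ?mem_iota.
Qed.

End Reducts.

Theorem theorem2p7 :
  forall k : nat, 1 <= k ->
    exists W : seq 'I_4, num_reducts_eq W k.
Proof.
move=> k k_gt0; have [X [lt_k dNX sole]] := exists_sole_square k.
by exists (stage ord_max X k k.-1 (X ++ X)); apply: num_reducts_stage.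
Qed.
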